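(* Let $b,t\in(0,1/9)$ and let $\mathcal S_t=\{S_1,S_2,S_3\}$ be the system on $\mathbb R$ given by $S_1(x)=tx$, $S_2(x)=bx$, $S_3(x)=(x+8)/9$, with attractor $K$ and $K_3=S_3(K)$. The following are equivalent: (i) for all positive integers $m,n$, $S_1^m(K_3)\cap S_2^n(K_3)=\varnothing$; (ii) $K=\{0\}\cup\bigcup_{m,n\ge0}S_1^mS_2^n(K_3)$, where the sets $S_1^mS_2^n(K_3)$, $(m,n)\in(\mathbb N\cup\{0\})^2$, are pairwise disjoint; (iii) for all positive integers $m,n$, $S_1^m(K)\cap S_2^n(K)=S_1^mS_2^n(K)$.
   Context: The attractor is the unique nonempty compact set $K\subset\mathbb R$ with $K=S_1(K)\cup S_2(K)\cup S_3(K)$; $S^m$ denotes the $m$-fold composition. *)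

From Stdlib Require Export Reals.
Open Scope R_scope.

Definition img (f : R -> R) (A : R -> Prop) : R -> Prop :=
  fun y => exists x, A x /\ y = f x.

Definition fpow (f : R -> R) (m : nat) : R -> R := Nat.iter m f.

Definition S1 (t : R) (x : R) : R := t * x.
Definition S2 (b : R) (x : R) : R := b * x.
Definition S3 (x : R) : R := (x + 8) / 9.

Definition is_attractor (t b : R) (K : R -> Prop) : Prop :=
  (exists x, K x) /\ compact K /\
  (forall y, K y <-> (img (S1 t) K y \/ img (S2 b) K y \/ img S3 K y)).

Definition K3 (K : R -> Prop) : R -> Prop := img S3 K.

Definition cond_i (t b : R) (K : R -> Prop) : Prop :=
  forall m n : nat, (1 <= m)%nat -> (1 <= n)%nat ->
    forall x, ~ (img (fpow (S1 t) m) (K3 K) x /\ img (fpow (S2 b) n) (K3 K) x).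

Definition piece (t b : R) (K : R -> Prop) (m n : nat) : R -> Prop :=
  img (fun x => fpow (S1 t) m (fpow (S2 b) n x)) (K3 K).

Definition cond_ii (t b : R) (K : R -> Prop) : Prop :=
  (forall x, K x <-> (x = 0 \/ exists m n : nat, piece t b K m n x)) /\
  (forall m n m' n' : nat, (m, n) <> (m', n') ->
     forall x, ~ (piece t b K m n x /\ piece t b K m' n' x)).

Definition cond_iii (t b : R) (K : R -> Prop) : Prop :=
  forall m n : nat, (1 <= m)%nat -> (1 <= n)%nat ->
    forall x, (img (fpow (S1 t) m) K x /\ img (fpow (S2 b) n) K x) <->
              img (fun y => fpow (S1 t) m (fpow (S2 b) n y)) K x.

(* Every point of K other than 0 has a unique address x = t^m b^n z with z in
   K3 ⊆ [8/9, 1]: repeatedly undo S1 or S2 until the point lands in K3, which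
   happens after finitely many steps because every map contracts by at least 9.
   Two addresses of the same point cancel down to either z = t^p b^q z' with
   p + q > 0, impossible since t^p b^q z' <= 1/9, or to t^p z = b^q z' with
   p, q >= 1, which is exactly what (i) forbids.  This gives (i) -> (ii), and
   also (i) -> (iii) after writing both points of S1^m(K) ∩ S2^n(K) in
   address form.  Conversely (ii) -> (i) is a special case of disjointness,
   and under (iii) a point of S1^m(K3) ∩ S2^n(K3) would be t^m b^n w with
   w in K ⊆ [0, 1], too small to be t^m z with z in K3. *)
From Stdlib Require Import Reals Lra Psatz Lia Arith Classical.
Open Scope R_scope.

Lemma fpow_scale (c x : R) (m : nat) : fpow (fun y => c * y) m x = c ^ m * x.
Proof.
  induction m as [|m IH]; unfold fpow in *; simpl.
  - ring.
  - rewrite IH; ring.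
Qed.

Lemma img_fpow_scale (c : R) (A : R -> Prop) (m : nat) (x : R) :
  img (fpow (fun y => c * y) m) A x <-> exists z, A z /\ x = c ^ m * z.
Proof.
  unfold img; split; intros [z [Az ->]]; exists z; rewrite ?fpow_scale; auto.
Qed.

Lemma img_fpow_scale2 (c d : R) (A : R -> Prop) (m n : nat) (x : R) :
  img (fun y => fpow (fun u => c * u) m (fpow (fun u => d * u) n y)) A x <->
  exists z, A z /\ x = c ^ m * (d ^ n * z).
Proof.
  unfold img; split; intros [z [Az ->]]; exists z; rewrite ?fpow_scale; auto.
Qed.

Lemma piece_iff (t b : R) (K : R -> Prop) (m n : nat) (x : R) :
  piece t b K m n x <-> exists z, K3 K z /\ x = t ^ m * (b ^ n * z).
Proof. exact (img_fpow_scale2 t b (K3 K) m n x). Qed.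

Lemma pow_in_unit (x : R) (p : nat) : 0 < x <= 1 -> 0 < x ^ p <= 1.
Proof. intros Hx; induction p; simpl; nra. Qed.

Lemma pow_le_base (x : R) (p : nat) : 0 < x <= 1 -> (1 <= p)%nat -> x ^ p <= x.
Proof.
  intros Hx Hp; destruct p as [|p]; [lia|].
  simpl; pose proof (pow_in_unit x p Hx); nra.
Qed.

Lemma contraction_upper_bound (A : R -> Prop) (c l : R) :
  0 <= l < 1 -> bound A -> (exists x, A x) ->
  (forall y, A y -> y <= c \/ exists z, A z /\ y - c <= l * (z - c)) ->
  forall y, A y -> y <= c.
Proof.
  intros Hl Hbd Hne Hcontr.
  destruct (completeness A Hbd Hne) as [s [Hub Hlub]].
  assert (Hs : s <= c).
  { destruct (Rle_dec s c) as [|Hsc]; [assumption|exfalso].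
    assert (s <= c + l * (s - c)).
    { apply Hlub; intros y Ay.
      destruct (Hcontr y Ay) as [Hy|[z [Az Hz]]].
      - nra.
      - pose proof (Hub z Az); nra. }
    nra. }
  intros y Ay; pose proof (Hub y Ay); lra.
Qed.

Section Attractor.

Variables b t : R.
Variable K : R -> Prop.
Hypothesis Hb : 0 < b < 1/9.
Hypothesis Ht : 0 < t < 1/9.
Hypothesis HK : is_attractor t b K.

Lemma attractor_closed y : K y -> K (t * y) /\ K (b * y) /\ K ((y + 8) / 9).
Proof.
  destruct HK as [_ [_ Hfix]]; intros Ky; repeat split; apply Hfix.
  - left; exists y; auto.
  - right; left; exists y; auto.
  - right; right; exists y; auto.
Qed.

Lemma attractor_cases x :
  K x -> exists y, K y /\ (x = t * y \/ x = b * y \/ x = (y + 8) / 9).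
Proof.
  destruct HK as [_ [_ Hfix]]; intros Kx; apply Hfix in Kx.
  destruct Kx as [[y [Ky ->]]|[[y [Ky ->]]|[y [Ky ->]]]]; exists y; auto.
Qed.

Lemma attractor_bound : bound K.
Proof.
  destruct HK as [_ [Hc _]]; destruct (compact_P1 K Hc) as [m [M HM]].
  exists M; intros z Kz; apply HM; assumption.
Qed.

Lemma attractor_le_1 x : K x -> x <= 1.
Proof.
  destruct HK as [Hne _].
  apply (contraction_upper_bound K 1 (1/9)); try lra; auto using attractor_bound.
  intros y Ky; destruct (attractor_cases y Ky) as [z [Kz [->|[->| ->]]]].
  - destruct (Rle_dec (t * z) 1); [left; assumption|right].
    exists z; split; [assumption|nra].
  - destruct (Rle_dec (b * z) 1); [left; assumption|right].
    exists z; split; [assumption|nra].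
  - right; exists z; split; [assumption|lra].
Qed.

Lemma attractor_ge_0 x : K x -> 0 <= x.
Proof.
  set (A := fun z => K (- z)).
  assert (HA : forall z, K z -> A (- z)) by (intros z Kz; unfold A; rewrite Ropp_involutive; assumption).
  assert (Hbd : bound A).
  { destruct HK as [_ [Hc _]]; destruct (compact_P1 K Hc) as [m [M HM]].
    exists (- m); intros z Az; pose proof (HM _ Az); lra. }
  assert (Hne : exists z, A z) by (destruct HK as [[x0 Kx0] _]; eauto).
  enough (forall y, A y -> y <= 0) by (intros Kx; pose proof (H _ (HA x Kx)); lra).
  apply (contraction_upper_bound A 0 (1/9)); try lra; auto.
  intros y Ay; destruct (attractor_cases (- y) Ay) as [z [Kz Hz]].
  destruct (Rle_dec y 0); [left; assumption|right].
  exists (- z); split; [apply HA; assumption|].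
  destruct Hz as [Hz|[Hz|Hz]]; nra.
Qed.

Lemma attractor_pow a c y : K y -> K (t ^ a * (b ^ c * y)).
Proof.
  intros Ky; induction a as [|a IH]; simpl.
  - rewrite Rmult_1_l; induction c as [|c IHc]; simpl.
    + rewrite Rmult_1_l; assumption.
    + rewrite Rmult_assoc; apply attractor_closed; assumption.
  - rewrite Rmult_assoc; apply attractor_closed; assumption.
Qed.

(* K is closed and contains t^N x0 -> 0. *)
Lemma attractor_contains_0 : K 0.
Proof.
  destruct HK as [[x0 Kx0] [Hc _]].
  destruct (classic (K 0)) as [|Hn]; [assumption|exfalso].
  destruct (compact_P2 K Hc 0 Hn) as [d Hd].
  assert (Habs : Rabs t < 1) by (rewrite Rabs_pos_eq; lra).
  destruct (pow_lt_1_zero t Habs d (cond_pos d)) as [N HN].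
  specialize (HN N (le_n _)); rewrite Rabs_pos_eq in HN by (apply pow_le; lra).
  apply (Hd (t ^ N * (b ^ 0 * x0))); [|apply attractor_pow; assumption].
  pose proof (attractor_le_1 x0 Kx0); pose proof (attractor_ge_0 x0 Kx0).
  pose proof (pow_le t N); unfold disc; simpl.
  rewrite Rminus_0_r, Rabs_pos_eq by (apply Rmult_le_pos; [apply pow_le|]; lra).
  nra.
Qed.

Lemma K3_bounds z : K3 K z -> K z /\ 8/9 <= z <= 1.
Proof.
  intros [y [Ky ->]]; pose proof (attractor_le_1 y Ky); pose proof (attractor_ge_0 y Ky).
  unfold S3; split; [apply attractor_closed; assumption|lra].
Qed.

(* Induction on N with 1 < 9^N x: undoing S1 or S2 multiplies x by more than 9. *)
Lemma attractor_address x :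
  K x -> x = 0 \/ exists a c z, K3 K z /\ x = t ^ a * (b ^ c * z).
Proof.
  intros Kx; destruct (Req_dec x 0) as [|Hx0]; [left; assumption|right].
  assert (Hx : 0 < x) by (pose proof (attractor_ge_0 x Kx); lra).
  assert (Hl : Rabs (1/9) < 1) by (rewrite Rabs_pos_eq; lra).
  destruct (pow_lt_1_zero _ Hl x Hx) as [N HN]; specialize (HN N (le_n _)).
  rewrite Rabs_pos_eq in HN by (apply pow_le; lra).
  assert (HxN : 1 < x * 9 ^ N).
  { assert (E : (1/9) ^ N * 9 ^ N = 1)
      by (rewrite <- Rpow_mult_distr; replace (1/9 * 9) with 1 by field; apply pow1).
    pose proof (pow_lt 9 N ltac:(lra)); nra. }
  clear Hx0 HN; revert x Kx Hx HxN; induction N as [|N IH]; intros x Kx Hx HxN; simpl in HxN.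
  - pose proof (attractor_le_1 x Kx); lra.
  - pose proof (pow_lt 9 N ltac:(lra)).
    destruct (attractor_cases x Kx) as [y [Ky [->|[->| ->]]]].
    + destruct (IH y Ky ltac:(nra) ltac:(nra)) as [a [c [z [Hz ->]]]].
      exists (S a), c, z; split; [assumption|simpl; ring].
    + destruct (IH y Ky ltac:(nra) ltac:(nra)) as [a [c [z [Hz ->]]]].
      exists a, (S c), z; split; [assumption|simpl; ring].
    + exists 0%nat, 0%nat, ((y + 8) / 9); split; [exists y; auto|simpl; ring].
Qed.

Lemma K3_not_rescaled p q z z' :
  K3 K z -> K3 K z' -> z = t ^ p * (b ^ q * z') -> p = 0%nat /\ q = 0%nat.
Proof.
  intros Hz Hz' E; apply K3_bounds in Hz; apply K3_bounds in Hz'.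
  pose proof (pow_in_unit t p ltac:(lra)); pose proof (pow_in_unit b q ltac:(lra)).
  destruct (Nat.eq_dec p 0) as [->|Hp], (Nat.eq_dec q 0) as [->|Hq]; [auto|exfalso..];
    simpl pow in E.
  - pose proof (pow_le_base b q ltac:(lra) ltac:(lia)); nra.
  - pose proof (pow_le_base t p ltac:(lra) ltac:(lia)); nra.
  - pose proof (pow_le_base t p ltac:(lra) ltac:(lia)).
    pose proof (pow_le_base b q ltac:(lra) ltac:(lia)).
    assert (0 <= t ^ p * b ^ q <= 1/9) by nra.
    rewrite <- Rmult_assoc in E; nra.
Qed.

Lemma K3_cross_address (Hi : cond_i t b K) p q z z' :
  K3 K z -> K3 K z' -> t ^ p * z = b ^ q * z' -> p = 0%nat /\ q = 0%nat.
Proof.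
  intros Hz Hz' E.
  destruct (Nat.eq_dec p 0) as [->|Hp], (Nat.eq_dec q 0) as [->|Hq]; [auto|..].
  - apply (K3_not_rescaled 0 q z z' Hz Hz'); simpl in *; lra.
  - destruct (K3_not_rescaled p 0 z' z Hz' Hz); [simpl in *; lra|lia].
  - exfalso; apply (Hi p q ltac:(lia) ltac:(lia) (t ^ p * z)); split.
    + exists z; split; [assumption|symmetry; exact (fpow_scale t z p)].
    + exists z'; split; [assumption|rewrite E; symmetry; exact (fpow_scale b z' q)].
Qed.

Lemma K3_address_unique_le (Hi : cond_i t b K) a c a' c' z z' : (a <= a')%nat ->
  K3 K z -> K3 K z' -> t ^ a * (b ^ c * z) = t ^ a' * (b ^ c' * z') -> a = a' /\ c = c'.
Proof.
  intros Ha Hz Hz' E.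
  pose proof (pow_in_unit t a ltac:(lra)); pose proof (pow_in_unit b c ltac:(lra)).
  pose proof (pow_in_unit b c' ltac:(lra)).
  replace a' with (a + (a' - a))%nat in E by lia; rewrite pow_add in E.
  destruct (le_lt_dec c c') as [Hc|Hc].
  - replace c' with (c + (c' - c))%nat in E by lia; rewrite pow_add in E.
    assert (E' : z = t ^ (a' - a) * (b ^ (c' - c) * z')).
    { apply (Rmult_eq_reg_l (t ^ a * b ^ c)); [|nra].
      transitivity (t ^ a * (b ^ c * z)); [ring|rewrite E; ring]. }
    destruct (K3_not_rescaled _ _ z z' Hz Hz' E'); lia.
  - replace c with (c' + (c - c'))%nat in E by lia; rewrite pow_add in E.
    assert (E' : t ^ (a' - a) * z' = b ^ (c - c') * z).
    { apply (Rmult_eq_reg_l (t ^ a * b ^ c')); [|nra].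
      transitivity (t ^ a * t ^ (a' - a) * (b ^ c' * z')); [ring|rewrite <- E; ring]. }
    destruct (K3_cross_address Hi _ _ z' z Hz' Hz E'); lia.
Qed.

Lemma K3_address_unique (Hi : cond_i t b K) a c a' c' z z' :
  K3 K z -> K3 K z' -> t ^ a * (b ^ c * z) = t ^ a' * (b ^ c' * z') -> a = a' /\ c = c'.
Proof.
  intros Hz Hz' E; destruct (le_lt_dec a a').
  - apply (K3_address_unique_le Hi a c a' c' z z'); assumption.
  - destruct (K3_address_unique_le Hi a' c' a c z' z); auto; lia.
Qed.

Lemma cond_i_ii : cond_i t b K -> cond_ii t b K.
Proof.
  intros Hi; split.
  - intros x; split.
    + intros Kx; destruct (attractor_address x Kx) as [|[a [c [z [Hz E]]]]]; [left; assumption|].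
      right; exists a, c; apply piece_iff; eauto.
    + intros [->|[m [n Hp]]]; [apply attractor_contains_0|].
      apply piece_iff in Hp as [z [Hz ->]]; apply attractor_pow, K3_bounds, Hz.
  - intros m n m' n' Hne x [P P']; apply piece_iff in P as [z [Hz ->]].
    apply piece_iff in P' as [z' [Hz' E]].
    destruct (K3_address_unique Hi m n m' n' z z' Hz Hz' E); subst; auto.
Qed.

Lemma cond_ii_i : cond_ii t b K -> cond_i t b K.
Proof.
  intros [_ Hdisj] m n Hm Hn x [P P'].
  apply img_fpow_scale in P as [z [Hz E]]; apply img_fpow_scale in P' as [z' [Hz' E']].
  apply (Hdisj m 0%nat 0%nat n ltac:(intros Heq; injection Heq; lia) x).
  split; apply piece_iff; [exists z | exists z']; split; auto; simpl; lra.
Qed.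

Lemma cond_i_iii : cond_i t b K -> cond_iii t b K.
Proof.
  intros Hi m n Hm Hn x.
  rewrite (img_fpow_scale t), (img_fpow_scale b), (img_fpow_scale2 t b); split.
  - intros [[y [Ky E]] [y' [Ky' E']]].
    destruct (attractor_address y Ky) as [->|[a [c [z [Hz Ey]]]]].
    { exists 0; split; [apply attractor_contains_0|rewrite E; ring]. }
    destruct (attractor_address y' Ky') as [->|[a' [c' [z' [Hz' Ey']]]]].
    { exists 0; split; [apply attractor_contains_0|rewrite E'; ring]. }
    assert (E2 : t ^ (m + a) * (b ^ c * z) = t ^ a' * (b ^ (n + c') * z')).
    { rewrite !pow_add; transitivity x; [rewrite E, Ey; ring|rewrite E', Ey'; ring]. }
    destruct (K3_address_unique Hi _ _ _ _ z z' Hz Hz' E2) as [_ Hc].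
    exists (t ^ a * (b ^ c' * z)); split; [apply attractor_pow, K3_bounds, Hz|].
    rewrite E, Ey, Hc, pow_add; ring.
  - intros [w [Kw ->]]; split.
    + exists (b ^ n * w); split; [|reflexivity].
      replace (b ^ n * w) with (t ^ 0 * (b ^ n * w)) by (simpl; ring).
      apply attractor_pow; assumption.
    + exists (t ^ m * w); split; [|ring].
      replace (t ^ m * w) with (t ^ m * (b ^ 0 * w)) by (simpl; ring).
      apply attractor_pow; assumption.
Qed.

Lemma cond_iii_i : cond_iii t b K -> cond_i t b K.
Proof.
  intros Hiii m n Hm Hn x [P P'].
  assert (Q : img (fun y => fpow (S1 t) m (fpow (S2 b) n y)) K x).
  { apply Hiii; auto; split.
    - destruct P as [z [Hz E]]; exists z; split; [apply K3_bounds|]; assumption.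
    - destruct P' as [z [Hz E]]; exists z; split; [apply K3_bounds|]; assumption. }
  apply img_fpow_scale in P as [z [Hz E]]; apply img_fpow_scale2 in Q as [w [Kw E']].
  pose proof (attractor_le_1 w Kw); pose proof (attractor_ge_0 w Kw).
  apply K3_bounds in Hz.
  pose proof (pow_in_unit t m ltac:(lra)); pose proof (pow_le_base b n ltac:(lra) Hn).
  assert (z = b ^ n * w) by (apply (Rmult_eq_reg_l (t ^ m)); lra).
  pose proof (pow_in_unit b n ltac:(lra)); nra.
Qed.

End Attractor.

Theorem proposition8 (b t : R) (K : R -> Prop) :
  0 < b < 1/9 -> 0 < t < 1/9 -> is_attractor t b K ->
  (cond_i t b K <-> cond_ii t b K) /\ (cond_i t b K <-> cond_iii t b K).
Proof.
  intros Hb Ht HK; split; split.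
  - apply cond_i_ii; assumption.
  - apply cond_ii_i; assumption.
  - apply cond_i_iii; assumption.
  - apply cond_iii_i; assumption.
Qed.
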